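(* Let $k$ be a field, $G$ a finite group of order $n$ with $1/n\in k$, and $\sigma\subseteq G$ a cyclic subgroup. Then the idempotent $e_\sigma\in R(\sigma)_{1/n}$ belongs to the kernel of the restriction homomorphism $R(\sigma)_{1/n}\to R(\sigma')_{1/n}$ for every proper subgroup $\sigma'\subsetneq\sigma$.
   Context: $R(H)$ is the representation ring of $H$ over $k$ and $(-)_{1/n}=-\otimes\mathbb{Z}[1/n]$. For a finite cyclic group $\rho$, define $e_{\mathrm{prim}}:=\prod_{\rho'}\bigl(1-\frac1{|\rho'|}\sum_{h\in\rho'}h\bigr)\in\mathbb{Z}[1/n][\rho]$, the product over the minimal nontrivial subgroups $\rho'$ of $\rho$. Let $l_0$ be obtained from $k$ by adjoining the $n$-th roots of unity, $\Gamma=\mathrm{Gal}(l_0/k)$, $\sigma^\vee:=\mathrm{Hom}(\sigma,l_0^\times)$. The element $e_{\mathrm{prim}}\in\mathbb{Z}[1/n][\sigma^\vee]$ is $\Gamma$-invariant, and $e_\sigma\in R(\sigma)_{1/n}$ is the idempotent corresponding to it under the isomorphisms $R(\sigma)_{1/n}\simeq R_{l_0}(\sigma)^\Gamma_{1/n}\simeq\mathbb{Z}[1/n][\sigma^\vee]^\Gamma$ (base change $-\otimes_kl_0$ followed by the character isomorphism). *)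

From HB Require Import structures.
From mathcomp Require Import all_boot all_order all_algebra all_fingroup all_solvable all_field all_character.
Set Implicit Arguments. Unset Strict Implicit. Unset Printing Implicit Defensive.
Import GRing.Theory.
Local Open Scope ring_scope.

(* Concrete model of the character group sigma^vee = Hom(sigma, l0^x),
   where z is a primitive n-th root of unity in l0 and n = |G|.
   Every hom sigma -> l0^x takes values in mu_n = {z^i : i < n}, so a
   character is encoded by an exponent function f : gT -> 'I_n,
   chi_f(g) = z ^+ f g, normalized to be 0 outside sigma. *)
Section Dual.
Variables (l0 : fieldType) (n : nat) (z : l0) (gT : finGroupType) (S : {set gT}).

Definition chtype := {ffun gT -> 'I_n}.

Definition chi (f : chtype) (g : gT) : l0 := z ^+ (f g).

Definition dual : {set chtype} :=
  [set f : chtype | [forall x, (x \notin S) ==> (val (f x) == 0%N)] &&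
    [forall x, forall y, ((x \in S) && (y \in S)) ==>
       (chi f (x * y)%g == chi f x * chi f y)]].

Definition chtriv (f : chtype) : bool := [forall g in S, chi f g == 1].

Definition chprod (f1 f2 h : chtype) : bool :=
  [forall g in S, chi f1 g * chi f2 g == chi h g].

(* the group ring Q[sigma^vee] (containing Z[1/n][sigma^vee]),
   elements are functions supported on dual *)
Definition gring := {ffun chtype -> rat}.

Definition gone : gring :=
  [ffun h => if (h \in dual) && chtriv h then 1 else 0].

Definition gdelta (x : chtype) : gring := [ffun h => if h == x then 1 else 0].

Definition gmul (a b : gring) : gring :=
  [ffun h => if h \in dual then
     \sum_(f1 in dual) \sum_(f2 in dual)
        (if chprod f1 f2 h then a f1 * b f2 else 0) else 0].

Definition gsub (a b : gring) : gring := [ffun h => a h - b h].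
Definition gscale (c : rat) (a : gring) : gring := [ffun h => c * a h].
Definition gsum (A : {set chtype}) : gring := [ffun h => \sum_(x in A) gdelta x h].

Definition is_subgrp (A : {set chtype}) : bool :=
  [&& A \subset dual, [exists f in A, chtriv f] &
     [forall f1 in A, forall f2 in A, forall h in dual,
        chprod f1 f2 h ==> (h \in A)]].

Definition nontriv (A : {set chtype}) : bool := [exists f in A, ~~ chtriv f].

Definition min_nontriv (A : {set chtype}) : bool :=
  [&& is_subgrp A, nontriv A &
     [forall B : {set chtype},
        [&& is_subgrp B, nontriv B & B \subset A] ==> (B == A)]].

Definition eprim : gring :=
  \big[gmul/gone]_(A : {set chtype} | min_nontriv A)
     gsub gone (gscale (#|A|%:R)^-1 (gsum A)).

End Dual.

(* multiplicity of the one-dimensional representation chi_f in the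
   l0-representation U of sigma: dimension of the chi_f-isotypic subspace *)
Definition mult (l0 : fieldType) (n : nat) (z : l0) (gT : finGroupType)
  (S : {group gT}) (d : nat) (U : mx_representation l0 S d) (f : chtype n gT) : nat :=
  \rank (\bigcap_(g in S) kermx (U g - (chi z f g)%:M))%MS.

(* Write sigma = <[g]> and sigma' = <[h]>. A character f of sigma restricts to the
   character of sigma' determined by f(h), so restriction of group rings is the push-forward
   along f |-> f(h) and is multiplicative. Since sigma' is proper, the kernel of f |-> f(h)
   is a nontrivial subgroup of sigma^vee; it contains a minimal nontrivial rho', whose factor
   1 - |rho'|^-1 sum_(rho') in e_prim restricts to 1 - 1 = 0. Hence e_prim restricts to 0.
   By the hypothesis on V and W, every character of sigma' then has the same multiplicity
   in V and W over l0, so ker P(V h) and ker P(W h) have the same dimension for every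
   polynomial P. As the order e of h is invertible in k, V h and W h are killed by the
   separable polynomial X^e - 1, and two such matrices A, C with rank P(A) = rank P(C) for
   all P are similar: a polynomial of least degree that is singular at A (equivalently at C)
   yields a common companion block, which has an invariant complement by Maschke averaging,
   and one concludes by induction on the dimension. *)

From HB Require Import structures.
From mathcomp Require Import all_boot all_order all_algebra all_fingroup all_solvable all_field all_character.
From mathcomp Require Import ring.
From Stdlib Require Import Classical_Prop Wf_nat.
Set Implicit Arguments. Unset Strict Implicit. Unset Printing Implicit Defensive.
Import GRing.Theory.
Local Open Scope ring_scope.

Section MatrixPolynomial.
Variable K : fieldType.

(* [horner_mx] only exists on ['M_n.+1]; this evaluation also covers [n = 0]. *)
Definition peval n (A : 'M[K]_n) (p : {poly K}) : 'M_n :=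
  \sum_(i < size p) p`_i *: A ^+ i.

Definition peval_free_below n (A : 'M[K]_n) (p : {poly K}) :=
  forall q : {poly K}, q != 0 -> (size q < size p)%N -> row_free (peval A q).

Lemma peval0 n (A : 'M[K]_n) : peval A 0 = 0.
Proof. by rewrite /peval size_poly0 big_ord0. Qed.

Lemma peval_horner n (A : 'M[K]_n.+1) p : horner_mx A p = peval A p.
Proof.
rewrite -{1}[p]coefK poly_def raddf_sum /=; apply: eq_bigr => i _.
by rewrite linearZ /= rmorphXn /= horner_mx_X.
Qed.

Lemma peval_XnsubC n (A : 'M[K]_n) k : peval A ('X^k - 1) = A ^+ k - 1.
Proof.
case: n A => [|n] A; first by apply/matrixP => [[]].
by rewrite -peval_horner rmorphB rmorphXn /= horner_mx_X rmorph1.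
Qed.

Lemma rank_kermxpoly_peval n (A : 'M[K]_n) p :
  (\rank (kermxpoly A p) + \rank (peval A p))%N = n.
Proof.
case: n A => [|n] A; first by rewrite !thinmx0 mxrank0.
by rewrite /kermxpoly mxrank_ker peval_horner subnK // rank_leq_row.
Qed.

Lemma row_free_pevalC n (A : 'M[K]_n) c : c != 0 -> row_free (peval A c%:P).
Proof.
move=> c0; have := rank_kermxpoly_peval A c%:P.
by rewrite kermxpolyC // mxrank0 add0n /row_free => ->.
Qed.

Lemma kermxpoly_compXn n (A : 'M[K]_n) (P : {poly K}) r :
  kermxpoly (A ^+ r) P = kermxpoly A (P \Po 'X^r).
Proof.
case: n A => [|n] A; first by rewrite !thinmx0.
rewrite /kermxpoly; congr (kermx _).
rewrite comp_polyE raddf_sum peval_horner /peval; apply: eq_bigr => i _ /=.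
by rewrite linearZ /= !rmorphXn /= horner_mx_X.
Qed.

Section Intertwining.
Variables (m n : nat) (T : 'M[K]_(m, n)) (A : 'M[K]_n) (A' : 'M[K]_m).
Hypothesis hT : T *m A = A' *m T.

Lemma intertwine_exp i : T *m A ^+ i = A' ^+ i *m T.
Proof.
elim: i => [|i IH]; first by rewrite !expr0 mulmx1 mul1mx.
by rewrite !exprSr -!mulmxE mulmxA IH -mulmxA hT mulmxA.
Qed.

Lemma intertwine_peval p : T *m peval A p = peval A' p *m T.
Proof.
rewrite /peval mulmx_sumr mulmx_suml; apply: eq_bigr => i _.
by rewrite -scalemxAr -scalemxAl intertwine_exp.
Qed.

Lemma intertwine_exp1 e : row_free T -> A ^+ e = 1 -> A' ^+ e = 1.
Proof.
move=> fT hA; apply: (row_free_inj fT).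
by rewrite -intertwine_exp hA mulmx1 mul1mx.
Qed.

End Intertwining.

End MatrixPolynomial.

Section Similarity.
Variable K : fieldType.

(* Similarity of square matrices whose sizes are only propositionally equal, as happens
   for block decompositions. *)
Definition mx_sim m n (A : 'M[K]_m) (C : 'M[K]_n) :=
  exists B : 'M_(m, n), [/\ m = n, row_free B & A *m B = B *m C].

Lemma mx_sim_sym m n (A : 'M[K]_m) (C : 'M[K]_n) : mx_sim A C -> mx_sim C A.
Proof.
case=> B [def_m fB hB]; move: A B fB hB; rewrite def_m => A B.
rewrite row_free_unit => uB hB; exists (invmx B); split=> //.
  by rewrite row_free_unit unitmx_inv.
by apply: canRL (mulKmx uB) _; rewrite mulmxA -hB mulmxK.
Qed.

Lemma mx_sim_trans m n p (A : 'M[K]_m) (B : 'M[K]_n) (C : 'M[K]_p) :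
  mx_sim A B -> mx_sim B C -> mx_sim A C.
Proof.
case=> [B1 [e1 f1 h1]] [B2 [e2 f2 h2]]; exists (B1 *m B2); split.
- by rewrite e1.
- by rewrite /row_free mxrankMfree // (eqP f1) e1.
by rewrite mulmxA h1 -!mulmxA h2.
Qed.

Lemma mx_sim_dim0 m n (A : 'M[K]_m) (C : 'M[K]_n) :
  m = 0%N -> n = 0%N -> mx_sim A C.
Proof.
move=> m0 n0; exists 0; split; first by rewrite m0 n0.
  by rewrite /row_free mxrank0 m0.
by rewrite mulmx0 mul0mx.
Qed.

Lemma mx_sim_block_diag s m n (P : 'M[K]_s) (A : 'M[K]_m) (C : 'M[K]_n) :
  mx_sim A C -> mx_sim (block_mx P 0 0 A) (block_mx P 0 0 C).
Proof.
case=> B [def_m fB hB]; exists (block_mx 1%:M 0 0 B); split; first by rewrite def_m.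
  by rewrite /row_free rank_diag_block_mx mxrank1 (eqP fB).
by rewrite !mulmx_block !mulmx0 !mul0mx !addr0 !add0r mulmx1 mul1mx hB.
Qed.

End Similarity.

Section CompanionBlock.
Variables (K : fieldType) (n : nat) (A : 'M[K]_n) (p : {poly K}).
Hypothesis p_neq0 : p != 0.

Local Notation s := (size p).-1.

Definition companion : 'M[K]_s :=
  \matrix_(i < s, j < s)
    (if (i.+1 < s)%N then ((j : nat) == i.+1)%:R else - (lead_coef p)^-1 * p`_j).

Definition krylov (v : 'rV_n) : 'M[K]_(s, n) := \matrix_(i < s) (v *m A ^+ i).

Lemma mulmx_krylov (v : 'rV_n) (u : 'rV_s) :
  u *m krylov v = v *m peval A (\poly_(j < s) oapp (u 0) 0 (insub j)).
Proof.
rewrite mulmx_sum_row /peval mulmx_sumr.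
rewrite (big_ord_widen s (fun i => v *m (_`_i *: A ^+ i)) (size_poly _ _)) [RHS]big_mkcond /=.
apply: eq_bigr => i _; set q := \poly_(j < s) _.
have qi : q`_i = u 0 i by rewrite coef_poly ltn_ord valK.
rewrite rowK -scalemxAr qi; case: ifP => // /negbT; rewrite -leqNgt => hi.
by rewrite -qi nth_default ?scale0r.
Qed.

Lemma row_free_krylov (v : 'rV_n) : v != 0 -> peval_free_below A p -> row_free (krylov v).
Proof.
move=> v0 hmin; rewrite -kermx_eq0; apply/rowV0P => u /sub_kermxP.
rewrite mulmx_krylov; set q := \poly_(j < s) _ => vq0.
have [q0|] := eqVneq q 0.
  apply/rowP => j; have : q`_j = u 0 j by rewrite coef_poly ltn_ord valK.
  by rewrite q0 coef0 mxE.
have ltsp : (s < size p)%N by rewrite ltn_predL size_poly_gt0.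
move=> /hmin/(_ (leq_ltn_trans (size_poly _ _) ltsp)) fq.
by move: v0; rewrite (row_free_inj fq (etrans vq0 (esym (mul0mx _ _)))) eqxx.
Qed.

Lemma krylov_companion (v : 'rV_n) : v *m peval A p = 0 ->
  krylov v *m A = companion *m krylov v.
Proof.
move=> vp0; have hs : size p = s.+1 by rewrite prednK // size_poly_gt0.
apply/row_matrixP => i; rewrite row_mul rowK row_mul [RHS]mulmx_sum_row.
rewrite -mulmxA mulmxE -exprSr; case: (boolP (i.+1 < s)%N) => hi.
  rewrite (bigD1 (Ordinal hi)) //= big1 ?addr0 => [|j hj].
    by rewrite !mxE /= eqxx hi scale1r rowK.
  rewrite !mxE hi; case: eqP => [hj'|]; last by rewrite scale0r.
  by move: hj; rewrite -(inj_eq val_inj) /= hj' eqxx.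
have -> : i.+1 = s by apply/eqP; rewrite eqn_leq ltn_ord leqNgt hi.
have lc0 : lead_coef p != 0 by rewrite lead_coef_eq0.
move: vp0; rewrite /peval mulmx_sumr -(big_mkord xpredT (fun i => v *m (p`_i *: A ^+ i))).
rewrite {1}hs big_nat_recr //= big_mkord => /eqP.
rewrite addr_eq0 -scalemxAr -[p`_s]/(p`_(size p).-1) -lead_coefE => /eqP hv.
apply: (scalerI lc0); rewrite -[lead_coef p *: _]opprK -hv scaler_sumr -sumrN.
apply: eq_bigr => j _.
rewrite !mxE (negPf hi) rowK scalerA -scalemxAr.
by rewrite mulrA mulrN mulfV // mulN1r scaleNr.
Qed.

Lemma companion_block : ~~ row_free (peval A p) -> peval_free_below A p ->
  exists2 M : 'M_(s, n), row_free M & M *m A = companion *m M.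
Proof.
move=> nfp hmin; have /rowV0Pn [v /sub_kermxP vp0 v0] : kermx (peval A p) != 0.
  by rewrite kermx_eq0.
by exists (krylov v); [apply: row_free_krylov | apply: krylov_companion].
Qed.

End CompanionBlock.

Section Averaging.
Variables (K : fieldType) (e n s : nat).
Variables (A : 'M[K]_n) (M : 'M[K]_(s, n)) (Cm : 'M[K]_s) (X : 'M[K]_(n, s)).
Hypotheses (e_neq0 : e%:R != 0 :> K) (hAe : A ^+ e = 1).
Hypotheses (hM : M *m A = Cm *m M) (hMX : M *m X = 1%:M).

Let avg_term i := A ^+ (e - i) *m (X *m M) *m A ^+ i.

(* Maschke's averaging of the projection [X *m M] onto [M] over the group generated by [A]. *)
Definition avg_proj : 'M[K]_n := e%:R^-1 *: \sum_(i < e) avg_term i.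

Lemma avg_proj_sub : (avg_proj <= M)%MS.
Proof.
rewrite scalemx_sub // summx_sub // => i _.
by rewrite /avg_term -!mulmxA (intertwine_exp hM) !mulmxA submxMl.
Qed.

Lemma mulmx_avg_proj : M *m avg_proj = M.
Proof.
have Mterm i : (i <= e)%N -> M *m avg_term i = M.
  move=> lei; rewrite /avg_term !mulmxA (intertwine_exp hM) -(mulmxA _ M X) hMX.
  by rewrite mulmx1 -(intertwine_exp hM) -mulmxA mulmxE -exprD subnK // hAe mulmx1.
rewrite /avg_proj -scalemxAr mulmx_sumr (eq_bigr (fun _ => M)) => [|i _]; last exact/Mterm/ltnW.
by rewrite sumr_const card_ord -scaler_nat scalerA mulVf // scale1r.
Qed.

Lemma avg_proj_comm : A *m avg_proj = avg_proj *m A.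
Proof.
have expS k : A *m A ^+ k = A ^+ k.+1 by rewrite exprS.
have expSr k : A ^+ k *m A = A ^+ k.+1 by rewrite exprSr.
have shift i : (i < e)%N -> A *m avg_term i.+1 = avg_term i *m A.
  move=> lti; rewrite /avg_term !mulmxA expS -subSn // subSS.
  by rewrite -!mulmxA expSr.
have [e' def_e] : exists e', e = e'.+1.
  by exists e.-1; rewrite prednK // lt0n; apply: contraNneq e_neq0 => ->.
rewrite /avg_proj -scalemxAr -scalemxAl mulmx_sumr mulmx_suml; congr (_ *: _).
rewrite def_e big_ord_recl big_ord_recr /= addrC; congr (_ + _).
  rewrite -shift ?def_e // /avg_term -def_e subn0 subnn hAe.
  by rewrite expr0 mulmx1 mul1mx.
by apply: eq_bigr => i _; apply: shift; rewrite def_e ltnS ltnW.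
Qed.

End Averaging.

Lemma stable_complement (K : fieldType) (e n s : nat)
    (A : 'M[K]_n) (M : 'M[K]_(s, n)) (Cm : 'M[K]_s) :
  e%:R != 0 :> K -> A ^+ e = 1 -> row_free M -> M *m A = Cm *m M ->
  exists r (R : 'M_(r, n)) (A2 : 'M_r),
    [/\ (s + r)%N = n, row_free R, (M :&: R = 0)%MS & R *m A = A2 *m R].
Proof.
move=> e_neq0 hAe fM hM; have [X hMX] := row_freeP fM.
set P := avg_proj e A M X.
have Psub : (P <= M)%MS := avg_proj_sub e X hM.
have MP : M *m P = M := mulmx_avg_proj e_neq0 hAe hM hMX.
pose R := row_base (kermx P).
exists (\rank (kermx P)), R, (R *m A *m pinvmx R).
have RP : (R <= kermx P)%MS by rewrite eq_row_base.
have rankP : \rank P = s.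
  apply/eqP; rewrite eqn_leq -{1}(eqP fM) mxrankS //=.
  by rewrite -(eqP fM) mxrankS // -{1}MP submxMl.
split.
- by rewrite mxrank_ker rankP subnKC // -rankP rank_leq_col.
- exact: row_base_free.
- apply/eqP/rowV0P => w; rewrite sub_capmx => /andP [wM wR].
  have <- : w *m P = w by rewrite -(mulmxKpV wM) -mulmxA MP.
  by apply/sub_kermxP; rewrite (submx_trans wR RP).
apply/esym/mulmxKpV; rewrite eq_row_base; apply/sub_kermxP.
by rewrite -mulmxA (avg_proj_comm M X e_neq0 hAe) mulmxA (sub_kermxP RP) mul0mx.
Qed.

Section InvariantSplitting.
Variables (K : fieldType) (n s r : nat) (A : 'M[K]_n).
Variables (M : 'M[K]_(s, n)) (R : 'M[K]_(r, n)) (A1 : 'M[K]_s) (A2 : 'M[K]_r).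
Hypotheses (dim_sum : (s + r)%N = n) (fM : row_free M) (fR : row_free R).
Hypotheses (capMR : (M :&: R = 0)%MS) (hM : M *m A = A1 *m M) (hR : R *m A = A2 *m R).

Lemma rank_adds_split : \rank (M + R)%MS = n.
Proof.
by have := mxrank_sum_cap M R; rewrite capMR mxrank0 addn0 (eqP fM) (eqP fR) dim_sum.
Qed.

Lemma rank_peval_split q :
  \rank (peval A q) = (\rank (peval A1 q) + \rank (peval A2 q))%N.
Proof.
have full : row_full (col_mx M R) by rewrite /row_full -addsmxE rank_adds_split.
rewrite -(eqmxMfull (peval A q) full) mul_col_mx -addsmxE.
rewrite (intertwine_peval hM) (intertwine_peval hR).
have := mxrank_sum_cap (peval A1 q *m M) (peval A2 q *m R).
have -> : (peval A1 q *m M :&: peval A2 q *m R = 0)%MS.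
  by apply/eqP; rewrite -submx0 -capMR capmxS // submxMl.
by rewrite mxrank0 addn0 !mxrankMfree.
Qed.

Lemma mx_sim_split : mx_sim (block_mx A1 0 0 A2) A.
Proof.
exists (col_mx M R); split => //.
  by rewrite /row_free -addsmxE rank_adds_split dim_sum.
by rewrite mul_block_col mul_col_mx hM hR !mul0mx addr0 add0r.
Qed.

End InvariantSplitting.

Lemma exists_least_singular_poly (K : fieldType) n (A : 'M[K]_n) (p0 : {poly K}) :
  p0 != 0 -> ~~ row_free (peval A p0) ->
  exists p : {poly K}, [/\ p != 0, ~~ row_free (peval A p) & peval_free_below A p].
Proof.
move=> nz0 nf0; pose singular k := exists p : {poly K},
  [/\ size p = k, p != 0 & ~~ row_free (peval A p)].
have [k [[[p [<- nzp nfp]] kmin] _]] :=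
  dec_inh_nat_subset_has_unique_least_element singular (fun k => classic _)
    (ex_intro _ _ (ex_intro _ p0 (And3 erefl nz0 nf0))).
exists p; split=> // q nzq ltqp; apply/negPn/negP => nfq.
by have /leP := kmin _ (ex_intro _ q (And3 erefl nzq nfq)); rewrite leqNgt ltqp.
Qed.

Theorem mx_sim_of_rank_peval (K : fieldType) (e : nat) : e%:R != 0 :> K ->
  forall n1 (A : 'M[K]_n1) n2 (C : 'M[K]_n2), A ^+ e = 1 -> C ^+ e = 1 ->
  (forall q, \rank (peval A q) = \rank (peval C q)) -> mx_sim A C.
Proof.
move=> e_neq0 n1; elim/ltn_ind: n1 => n1 IH A n2 C hA hC hr.
have dim_eq : n2 = n1.
  by have := hr 1%:P; rewrite !(eqP (row_free_pevalC _ (oner_neq0 K))).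
have [n1_0|n1_gt0] := posnP n1; first by apply: mx_sim_dim0; rewrite // dim_eq.
have rfAC q : row_free (peval C q) = row_free (peval A q) by rewrite /row_free -hr dim_eq.
have [p [nzp nfp pmin]] : exists p : {poly K},
    [/\ p != 0, ~~ row_free (peval A p) & peval_free_below A p].
  apply: (exists_least_singular_poly (p0 := 'X^e - 1)).
    rewrite -size_poly_eq0 -polyC1 size_XnsubC // lt0n.
    by apply: contraNneq e_neq0 => ->.
  by rewrite peval_XnsubC hA subrr /row_free mxrank0 eq_sym -lt0n.
have s_gt0 : (0 < (size p).-1)%N.
  rewrite -ltnS prednK ?size_poly_gt0 // ltn_neqAle eq_sym size_poly_gt0 nzp andbT.
  apply: contra nfp => /eqP sz1; move: nzp.
  by rewrite (size1_polyC (eq_leq sz1)) polyC_eq0 => /row_free_pevalC.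
have [MA fMA hMA] := companion_block nzp nfp pmin.
have [MC fMC hMC] : exists2 M : 'M_((size p).-1, n2), row_free M & M *m C = companion p *m M.
  by apply: companion_block; rewrite // ?rfAC // => q nzq ltqp; rewrite rfAC pmin.
have [rA [RA [A2 [dimA fRA capA hRA]]]] := stable_complement e_neq0 hA fMA hMA.
have [rC [RC [C2 [dimC fRC capC hRC]]]] := stable_complement e_neq0 hC fMC hMC.
have simA2C2 : mx_sim A2 C2.
  apply: IH (intertwine_exp1 hRA fRA hA) (intertwine_exp1 hRC fRC hC) _.
    by rewrite -dimA -{1}[rA]add0n ltn_add2r.
  move=> q; apply/eqP; rewrite -(eqn_add2l (\rank (peval (companion p) q))).
  rewrite -(rank_peval_split dimA fMA fRA capA hMA hRA) hr.
  by rewrite (rank_peval_split dimC fMC fRC capC hMC hRC).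
apply: mx_sim_trans (mx_sim_sym (mx_sim_split dimA fMA fRA capA hMA hRA)) _.
exact: mx_sim_trans (mx_sim_block_diag _ simA2C2) (mx_sim_split dimC fMC fRC capC hMC hRC).
Qed.

Corollary mx_sim_of_rank_kermxpoly (K : fieldType) (e : nat) n1 (A : 'M[K]_n1) n2 (C : 'M[K]_n2) :
  e%:R != 0 :> K -> A ^+ e = 1 -> C ^+ e = 1 ->
  (forall q, \rank (kermxpoly A q) = \rank (kermxpoly C q)) -> mx_sim A C.
Proof.
move=> e_neq0 hA hC hker; apply: (mx_sim_of_rank_peval e_neq0 hA hC) => q.
have rank_ker0 m (B : 'M[K]_m) : \rank (kermxpoly B 0) = m.
  by have := rank_kermxpoly_peval B 0; rewrite peval0 mxrank0 addn0.
apply/eqP; rewrite -(eqn_add2l (\rank (kermxpoly A q))) rank_kermxpoly_peval.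
by rewrite hker rank_kermxpoly_peval -(rank_ker0 _ A) hker rank_ker0.
Qed.

Section RootsOfUnityEigenspaces.
Variable K : fieldType.

Lemma kermxpoly_dvd n (U : 'M[K]_n) (p q : {poly K}) :
  q %| p -> (kermxpoly U q <= kermxpoly U p)%MS.
Proof.
case: n U => [|n] U; first by rewrite thinmx0 sub0mx.
move=> /dvdpP [r ->]; apply/sub_kermxP; rewrite mulrC rmorphM /= -mulmxE mulmxA.
by rewrite mulmx_ker mul0mx.
Qed.

Lemma sub_kermxpoly_coprime n (U : 'M[K]_n.+1) (P P1 R : {poly K}) :
  coprimep P R -> horner_mx U (P1 * R) = 0 -> (kermxpoly U P <= kermxpoly U P1)%MS.
Proof.
move=> cPR UP1R; have [[u1 u2] /= bezout] := Bezout_eq1_coprimepP _ _ cPR.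
have -> : P1 = P * (P1 * u1) + P1 * R * u2.
  by rewrite -[LHS]mulr1 -bezout; ring.
rewrite rmorphM in UP1R; apply/sub_kermxP.
rewrite /kermxpoly rmorphD !rmorphM /= UP1R mul0r addr0.
by rewrite -[_ * _]/(_ *m _) mulmxA mulmx_ker mul0mx.
Qed.

Lemma rank_kermxpoly_unity n (U : 'M[K]_n) d (w : K) (P : {poly K}) :
  d.-primitive_root w -> U ^+ d = 1 ->
  \rank (kermxpoly U P) = (\sum_(j < d | root P (w ^+ j)) \rank (eigenspace U (w ^+ j)))%N.
Proof.
move=> w_prim Ud; case: n U Ud => [|n] U Ud.
  by rewrite thinmx0 mxrank0 big1 // => j _; rewrite thinmx0 mxrank0.
pose S := [pred j : 'I_d | root P (w ^+ j)].
pose P1 := \prod_(j < d | S j) ('X - (w ^+ j)%:P).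
pose R := \prod_(j < d | ~~ S j) ('X - (w ^+ j)%:P).
have coprime_factors (I : pred 'I_d) : {in I &, forall i j : 'I_d, j != i ->
    coprimep ('X - (w ^+ i)%:P) ('X - (w ^+ j)%:P)}.
  move=> i j _ _ ji; rewrite coprimep_XsubC root_XsubC (eq_prim_root_expr w_prim).
  by rewrite !modn_small // -(inj_eq val_inj) in ji *.
have kerP1 := kermxpoly_prod U (coprime_factors S).
have UP1R : horner_mx U (P1 * R) = 0.
  have -> : P1 * R = 'X^d - 1 by rewrite -(factor_Xn_sub_1 w_prim) big_mkord (bigID S).
  by rewrite rmorphB rmorphXn /= horner_mx_X rmorph1 Ud subrr.
have cPR : coprimep P R.
  apply: (big_ind (coprimep P)) => [|x y cx cy|j nSj]; rewrite ?coprimep1 //.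
    by rewrite coprimepMr cx.
  by rewrite coprimep_XsubC.
have -> : \rank (kermxpoly U P) = \rank (kermxpoly U P1).
  apply/eqmx_rank/andP; split; first exact: sub_kermxpoly_coprime cPR UP1R.
  rewrite kerP1; apply/sumsmx_subP => j Sj; apply: kermxpoly_dvd.
  by rewrite dvdp_XsubCl.
rewrite kerP1 (mxdirectP (mxdirect_sum_kermx U (coprime_factors S))) /=.
by apply: eq_bigr => j _; rewrite eigenspace_poly.
Qed.

End RootsOfUnityEigenspaces.

Lemma modn_mul_dvd d n a b t :
  a = b %[mod d] -> (n %| d * t)%N -> (a * t = b * t %[mod n])%N.
Proof.
move=> eq_ab /dvdnP [k def_dt].
by rewrite (divn_eq a d) (divn_eq b d) eq_ab !mulnDl -!mulnA def_dt !mulnA !modnMDl.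
Qed.

Section CyclicDual.
Variables (l0 : fieldType) (z : l0) (gT : finGroupType) (G sigma : {group gT}) (g : gT).
Hypotheses (hz : #|G|.-primitive_root z) (hsG : sigma \subset G).
Hypothesis hg : (sigma : {set gT}) = <[g]>%g.

Local Notation n := #|G|.
Local Notation D := (dual n z sigma).
Local Notation d := #[g]%g.

Lemma mem_cycle_gen : g \in sigma.
Proof. by rewrite hg cycle_id. Qed.

Lemma order_gen_dvdn : (d %| n)%N.
Proof. exact/order_dvdG/(subsetP hsG)/mem_cycle_gen. Qed.

Lemma expz_inj (a b : 'I_n) : z ^+ a = z ^+ b -> a = b.
Proof.
by move/eqP; rewrite (eq_prim_root_expr hz) !modn_small // => /eqP /val_inj.
Qed.

Lemma dual_out f x : f \in D -> x \notin sigma -> val (f x) = 0%N.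
Proof. by rewrite inE => /andP [/forallP /(_ x) /implyP out _] /out /eqP. Qed.

Lemma dual_chiM f x y : f \in D -> x \in sigma -> y \in sigma ->
  chi z f (x * y)%g = chi z f x * chi z f y.
Proof.
rewrite inE => /andP [_ /forallP /(_ x) /forallP /(_ y) /implyP mul] hx hy.
by apply/eqP/mul; rewrite hx hy.
Qed.

Lemma mem_dual (f : chtype n gT) :
    (forall x, x \notin sigma -> val (f x) = 0%N) ->
    (forall x y, x \in sigma -> y \in sigma ->
       chi z f (x * y)%g = chi z f x * chi z f y) ->
  f \in D.
Proof.
move=> out mul; rewrite inE; apply/andP; split; apply/forallP => x.
  by apply/implyP => /out ->.
by apply/forallP => y; apply/implyP => /andP [hx hy]; rewrite mul.
Qed.

Lemma dual_chi1 f : f \in D -> chi z f 1%g = 1.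
Proof.
move=> fD; have := dual_chiM fD (group1 sigma) (group1 sigma); rewrite mulg1.
have z_neq0 : chi z f 1%g != 0 by rewrite expf_neq0 // (prim_root_eq0 hz) -lt0n cardG_gt0.
by rewrite -{1}[chi z f 1%g]mulr1 => /(mulfI z_neq0).
Qed.

Lemma dual_chiX f i : f \in D -> chi z f (g ^+ i)%g = chi z f g ^+ i.
Proof.
move=> fD; elim: i => [|i IH]; first by rewrite expg0 expr0 dual_chi1.
by rewrite expgSr dual_chiM ?groupX ?mem_cycle_gen // IH exprSr.
Qed.

Lemma dual_inj_gen f1 f2 : f1 \in D -> f2 \in D -> chi z f1 g = chi z f2 g -> f1 = f2.
Proof.
move=> f1D f2D eq_g; apply/ffunP => x; have [xs|xNs] := boolP (x \in sigma).
  move: xs; rewrite hg => /cycleP [i ->]; apply: expz_inj.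
  by move: (dual_chiX i f1D) (dual_chiX i f2D); rewrite eq_g /chi => -> ->.
by apply: val_inj; rewrite !dual_out.
Qed.

Definition dlog (x : gT) : nat := find (fun i => g ^+ i == x)%g (iota 0 d).

Lemma dlogK x : x \in sigma -> (g ^+ dlog x)%g = x.
Proof.
rewrite hg => /cyclePmin [i lti ->].
have has_i : has (fun j => g ^+ j == g ^+ i)%g (iota 0 d).
  by apply/hasP; exists i; rewrite ?mem_iota.
have := nth_find 0 has_i; rewrite nth_iota ?add0n => [/eqP //|].
by move: has_i; rewrite has_find size_iota.
Qed.

Lemma dlogM x y : x \in sigma -> y \in sigma ->
  dlog (x * y)%g = (dlog x + dlog y)%N %[mod d].
Proof.
by move=> xs ys; apply/eqP; rewrite -eq_expg_mod_order expgD !dlogK ?groupM.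
Qed.

(* This is a character only when [n %| d * t], as [dlog] is only defined modulo [d]. *)
Definition dual_of_exp (t : nat) : chtype n gT :=
  [ffun x => if x \in sigma then Ordinal (ltn_pmod (dlog x * t) (cardG_gt0 G))
             else Ordinal (cardG_gt0 G)].

Lemma dual_of_exp_chi t x : x \in sigma -> chi z (dual_of_exp t) x = z ^+ (dlog x * t).
Proof. by move=> xs; rewrite /chi ffunE xs /= (prim_expr_mod hz). Qed.

Lemma dual_of_exp_in t : (n %| d * t)%N -> dual_of_exp t \in D.
Proof.
move=> dvd_dt; apply: mem_dual => [x xNs|x y xs ys]; first by rewrite ffunE (negPf xNs).
rewrite !dual_of_exp_chi ?groupM // -exprD -mulnDl; apply/eqP.
by rewrite (eq_prim_root_expr hz); apply/eqP/modn_mul_dvd/dvd_dt/dlogM.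
Qed.

Lemma dual_of_exp_gen t : (n %| d * t)%N -> chi z (dual_of_exp t) g = z ^+ t.
Proof.
move=> dvd_dt; rewrite dual_of_exp_chi ?mem_cycle_gen //; apply/eqP.
rewrite (eq_prim_root_expr hz) -{2}[t]mul1n; apply/eqP/modn_mul_dvd/dvd_dt.
by apply/eqP; rewrite -eq_expg_mod_order expg1 dlogK ?mem_cycle_gen.
Qed.

Definition gen_root : l0 := z ^+ (n %/ d).

Lemma gen_root_prim : d.-primitive_root gen_root.
Proof. exact/(dvdn_prim_root hz)/order_gen_dvdn. Qed.

Definition dual_char (j : 'I_d) : chtype n gT := dual_of_exp (j * (n %/ d)).

Lemma dual_char_dvdn (j : nat) : (n %| d * (j * (n %/ d)))%N.
Proof. by rewrite mulnCA [(d * _)%N]mulnC divnK ?order_gen_dvdn // dvdn_mull. Qed.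

Lemma dual_char_in j : dual_char j \in D.
Proof. exact/dual_of_exp_in/dual_char_dvdn. Qed.

Lemma dual_char_gen j : chi z (dual_char j) g = gen_root ^+ j.
Proof. by rewrite dual_of_exp_gen ?dual_char_dvdn // -exprM mulnC. Qed.

Lemma dual_char_inj : injective dual_char.
Proof.
move=> i j /(congr1 (fun f => chi z f g)) /eqP; rewrite !dual_char_gen.
by rewrite (eq_prim_root_expr gen_root_prim) !modn_small // => /eqP /val_inj.
Qed.

Lemma dual_charP f : f \in D -> exists j, f = dual_char j.
Proof.
move=> fD; have : chi z f g ^+ d = 1 by rewrite -dual_chiX // expg_order dual_chi1.
rewrite /chi -exprM => /eqP; rewrite -(prim_order_dvd hz).
have def_n : n = (n %/ d * d)%N by rewrite divnK // order_gen_dvdn.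
move=> dvd_n; have /divnK def_fg : (n %/ d %| f g)%N.
  by rewrite -(dvdn_pmul2r (order_gt0 g)) -def_n.
have m_gt0 : (0 < n %/ d)%N by rewrite -(ltn_pmul2r (order_gt0 g)) -def_n cardG_gt0.
have lt_j : (f g %/ (n %/ d) < d)%N by rewrite ltn_divLR // mulnC -def_n ltn_ord.
exists (Ordinal lt_j); apply: dual_inj_gen => //; first exact: dual_char_in.
by rewrite dual_char_gen /gen_root -exprM mulnC /= def_fg.
Qed.

Lemma sum_dual (R : nmodType) (F : chtype n gT -> R) :
  \sum_(f in D) F f = \sum_(j < d) F (dual_char j).
Proof.
rewrite -(big_imset _ (in2W dual_char_inj)) /=; apply: eq_bigl => f.
apply/idP/imsetP => [/dual_charP [j ->]|[j _ ->]]; last exact: dual_char_in.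
by exists j.
Qed.

Definition dual_mul_char (f1 f2 : chtype n gT) : chtype n gT :=
  [ffun x => if x \in sigma then Ordinal (ltn_pmod (f1 x + f2 x) (cardG_gt0 G))
             else Ordinal (cardG_gt0 G)].

Lemma dual_mul_char_chi f1 f2 x : x \in sigma ->
  chi z (dual_mul_char f1 f2) x = chi z f1 x * chi z f2 x.
Proof. by move=> xs; rewrite /chi ffunE xs /= (prim_expr_mod hz) exprD. Qed.

Lemma dual_mul_char_in f1 f2 : f1 \in D -> f2 \in D -> dual_mul_char f1 f2 \in D.
Proof.
move=> f1D f2D; apply: mem_dual => [x xNs|x y xs ys]; first by rewrite ffunE (negPf xNs).
by rewrite !dual_mul_char_chi ?groupM // !(dual_chiM _ xs ys) // mulrACA.
Qed.

Lemma chprodE f1 f2 f : f1 \in D -> f2 \in D -> f \in D ->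
  chprod z sigma f1 f2 f = (f == dual_mul_char f1 f2).
Proof.
move=> f1D f2D fD; apply/forallP/eqP => [prod_f|-> x]; last first.
  by apply/implyP => xs; rewrite dual_mul_char_chi.
apply: dual_inj_gen; rewrite ?dual_mul_char_in // dual_mul_char_chi ?mem_cycle_gen //.
by have /implyP /(_ mem_cycle_gen) /eqP := prod_f g.
Qed.

Definition dual_one : chtype n gT := dual_of_exp 0.

Lemma dual_one_in : dual_one \in D.
Proof. by apply: dual_of_exp_in; rewrite muln0 dvdn0. Qed.

Lemma dual_one_val x : val (dual_one x) = 0%N.
Proof. by rewrite ffunE; case: ifP => //= _; rewrite muln0 mod0n. Qed.

Lemma chtrivE f : f \in D -> chtriv z sigma f = (f == dual_one).
Proof.
move=> fD; apply/forallP/eqP => [triv_f|-> x]; last first.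
  by apply/implyP => _; rewrite /chi dual_one_val expr0.
apply: dual_inj_gen; rewrite ?dual_one_in // /chi dual_one_val expr0.
by have /implyP /(_ mem_cycle_gen) /eqP := triv_f g.
Qed.

End CyclicDual.

Lemma repr_mx_exp (F : fieldType) (gT : finGroupType) (G : {group gT}) N
    (rG : mx_representation F G N) x i :
  x \in G -> rG (x ^+ i)%g = rG x ^+ i.
Proof.
move=> xG; elim: i => [|i IH]; first by rewrite expg0 repr_mx1 expr0.
by rewrite expgSr repr_mxM ?groupX // IH exprSr.
Qed.

Section Multiplicities.
Variables (l0 : fieldType) (z : l0) (gT : finGroupType) (G sigma : {group gT}) (g : gT).
Hypotheses (hz : #|G|.-primitive_root z) (hsG : sigma \subset G).
Hypothesis hg : (sigma : {set gT}) = <[g]>%g.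
Variables (N : nat) (Y : mx_representation l0 sigma N).

Local Notation n := #|G|.
Local Notation D := (dual n z sigma).

Lemma mult_eigenspace f : f \in D -> mult z Y f = \rank (eigenspace (Y g) (chi z f g)).
Proof.
move=> fD; have gs := mem_cycle_gen hg.
rewrite /mult /eigenspace; apply/eqmx_rank/andP; split.
  exact: (@bigcapmx_inf _ _ g _ _ _ _ _ gs).
apply/sub_bigcapmxP => x xs; have /cycleP [i ->] : x \in <[g]>%g by rewrite -hg.
set E := kermx _; have EY : E *m Y g = chi z f g *: E.
  by apply/eqP; rewrite -subr_eq0 -mul_mx_scalar -mulmxBr mulmx_ker.
have EYi j : E *m Y g ^+ j = chi z f g ^+ j *: E.
  elim: j => [|j IH]; first by rewrite !expr0 mulmx1 scale1r.
  by rewrite exprSr mulmxA IH -scalemxAl EY scalerA exprSr.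
apply/sub_kermxP; rewrite mulmxBr repr_mx_exp // EYi (dual_chiX hz hg) //.
by rewrite mul_mx_scalar subrr.
Qed.

Lemma rank_kermxpoly_repr h (P : {poly l0}) : h \in sigma ->
  \rank (kermxpoly (Y h) P) =
  (\sum_(i < n | root P (z ^+ i)) \sum_(f in D | f h == i) mult z Y f)%N.
Proof.
move=> hs; have gs := mem_cycle_gen hg.
have [r def_h] : exists r, h = (g ^+ r)%g by apply/cycleP; rewrite -hg.
have Yg_d : Y g ^+ #[g]%g = 1 by rewrite -repr_mx_exp // expg_order repr_mx1.
rewrite def_h repr_mx_exp // kermxpoly_compXn.
rewrite (rank_kermxpoly_unity _ (gen_root_prim hz hsG hg) Yg_d).
transitivity (\sum_(f in D | root P (chi z f (g ^+ r)%g)) mult z Y f)%N.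
  rewrite big_mkcond [RHS]big_mkcondr (sum_dual hz hsG hg); apply: eq_bigr => j _.
  have jD := dual_char_in hz hsG hg j.
  rewrite mult_eigenspace // (dual_chiX hz hg) //.
  by rewrite (dual_char_gen hz hsG hg) root_comp hornerXn.
rewrite (partition_big (fun f : chtype n gT => f (g ^+ r)%g) (fun i => root P (z ^+ i))) /=.
  apply: eq_bigr => i Pi; apply: eq_bigl => f.
  by case: eqP => [fi|]; rewrite ?andbF // /chi fi Pi !andbT.
by move=> f /andP [].
Qed.

End Multiplicities.

Lemma sum_cond_eq (R : nmodType) (T : finType) (P : pred T) (x : T) (c : R) :
  \sum_(y | P y) (if y == x then c else 0) = if P x then c else 0.
Proof.
rewrite big_mkcond (eq_bigr (fun y => if y == x then (if P x then c else 0) else 0)).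
  by rewrite -big_mkcond big_pred1_eq.
by move=> y _; case: eqP => [->|]; case: (P _).
Qed.

Lemma min_nontriv_sub (l0 : fieldType) (n : nat) (z : l0) (gT : finGroupType)
    (S : {set gT}) (B : {set chtype n gT}) :
  is_subgrp z S B -> nontriv z S B -> exists2 A, min_nontriv z S A & A \subset B.
Proof.
move=> sgB ntB; pose P A := [&& is_subgrp z S A, nontriv z S A & A \subset B].
have PB : P B by rewrite /P sgB ntB subxx.
have [A /and3P [sgA ntA sAB] Amin] := arg_minnP (fun A : {set chtype n gT} => #|A|) PB.
exists A => //; apply/and3P; split=> //; apply/forallP => C; apply/implyP => /and3P [sgC ntC sCA].
by rewrite eqEcard sCA Amin // /P sgC ntC (subset_trans sCA sAB).
Qed.

Section Restriction.
Variables (l0 : fieldType) (z : l0) (gT : finGroupType) (G sigma : {group gT}) (g : gT).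
Hypotheses (hz : #|G|.-primitive_root z) (hsG : sigma \subset G).
Hypothesis hg : (sigma : {set gT}) = <[g]>%g.
Variable h : gT.
Hypothesis hs : h \in sigma.

Local Notation n := #|G|.
Local Notation D := (dual n z sigma).
Local Notation dual_mul := (@dual_mul_char gT G sigma).

(* A character of [<[h]>] is determined by its value [z ^+ i] at [h], so [res_coef a i] is
   the coefficient of that character in the restriction of [a] to [<[h]>]. *)
Definition res_coef (a : gring n gT) (i : 'I_n) : rat := \sum_(f in D | f h == i) a f.

Lemma sum_dual_by_res (F : chtype n gT -> rat) :
  \sum_(f in D) F f = \sum_(i < n) \sum_(f in D | f h == i) F f.
Proof. exact: partition_big. Qed.

Lemma dual_mul_char_res f1 f2 : val (dual_mul f1 f2 h) = ((f1 h + f2 h) %% n)%N.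
Proof. by rewrite ffunE hs. Qed.

Lemma res_coef_gmul a b i :
  res_coef (gmul z sigma a b) i =
  \sum_(i1 < n) \sum_(i2 < n)
     (if ((i1 + i2) %% n == i)%N then res_coef a i1 * res_coef b i2 else 0).
Proof.
transitivity (\sum_(f1 in D) \sum_(f2 in D)
    (if ((f1 h + f2 h) %% n == i)%N then a f1 * b f2 else 0)).
  rewrite /res_coef (eq_bigr (fun f => \sum_(f1 in D) \sum_(f2 in D)
      (if f == dual_mul f1 f2 then a f1 * b f2 else 0))); last first.
    move=> f /andP [fD _]; rewrite ffunE fD; apply: eq_bigr => f1 f1D.
    by apply: eq_bigr => f2 f2D; rewrite (chprodE hz hg).
  rewrite exchange_big; apply: eq_bigr => f1 f1D.
  rewrite exchange_big; apply: eq_bigr => f2 f2D.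
  by rewrite sum_cond_eq (dual_mul_char_in hz) //= -(inj_eq val_inj) /= dual_mul_char_res.
rewrite sum_dual_by_res; apply: eq_bigr => i1 _.
transitivity (\sum_(f1 in D | f1 h == i1) \sum_(i2 < n) \sum_(f2 in D | f2 h == i2)
    (if ((i1 + i2) %% n == i)%N then a f1 * b f2 else 0)).
  apply: eq_bigr => f1 /andP [_ /eqP <-]; rewrite sum_dual_by_res.
  by apply: eq_bigr => i2 _; apply: eq_bigr => f2 /andP [_ /eqP <-].
rewrite exchange_big; apply: eq_bigr => i2 _ /=; case: ifP => _; last by rewrite !big1.
by rewrite big_distrlr.
Qed.

Lemma res_coef_gmul_eq0 a b :
    (forall i, res_coef a i = 0) \/ (forall i, res_coef b i = 0) ->
  forall i, res_coef (gmul z sigma a b) i = 0.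
Proof.
move=> ab0 i; rewrite res_coef_gmul big1 // => i1 _; rewrite big1 // => i2 _.
by case: ab0 => ->; rewrite ?mul0r ?mulr0 if_same.
Qed.

Lemma res_coef_prod_eq0 (I : finType) (P : pred I) (F : I -> gring n gT) A0 :
    P A0 -> (forall i, res_coef (F A0) i = 0) ->
  forall i, res_coef (\big[gmul z sigma/gone n z sigma]_(A | P A) F A) i = 0.
Proof.
move=> PA0 FA0; elim: (index_enum I) (mem_index_enum A0) => // A s IH.
rewrite inE big_cons => /orP [/eqP <-|A0s]; first by rewrite PA0; apply: res_coef_gmul_eq0; left.
by case: (P A); [apply: res_coef_gmul_eq0; right|]; apply: IH.
Qed.

Definition res_kernel : {set chtype n gT} := [set f in D | val (f h) == 0%N].

Lemma res_coef_factor_eq0 (A : {set chtype n gT}) :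
    A \subset res_kernel -> A != set0 ->
  forall i, res_coef (gsub (gone n z sigma) (gscale (#|A|%:R)^-1 (gsum A))) i = 0.
Proof.
move=> sAK A0 i; have AD f : f \in A -> f \in D by move/(subsetP sAK); rewrite inE => /andP [].
have Ah f : f \in A -> val (f h) = 0%N by move/(subsetP sAK); rewrite inE => /andP [_ /eqP].
rewrite /res_coef (eq_bigr (fun f => (if f == dual_one G sigma g then 1 else 0) -
    (#|A|%:R)^-1 * \sum_(x in A) (if f == x then 1 else 0))); last first.
  move=> f /andP [fD _]; rewrite !ffunE fD (chtrivE hz hg) //.
  by congr (_ - _ * _); apply: eq_bigr => x _; rewrite ffunE.
rewrite sumrB -mulr_sumr exchange_big /= sum_cond_eq (dual_one_in hz hg) /=.
rewrite (eq_bigr (fun _ => if 0%N == i then 1 else 0)) => [|x xA]; last first.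
  by rewrite sum_cond_eq AD //= -(inj_eq val_inj) /= Ah.
rewrite -(inj_eq val_inj) /= (dual_one_val G sigma g) sumr_const.
case: (0%N == i); last by rewrite mul0rn mulr0 subr0.
by rewrite mulVf ?subrr // Num.Theory.pnatr_eq0 cards_eq0.
Qed.

Lemma res_kernel_subgrp : is_subgrp z sigma res_kernel.
Proof.
apply/and3P; split.
- by apply/subsetP => f; rewrite inE => /andP [].
- apply/existsP; exists (dual_one G sigma g).
  by rewrite inE (dual_one_in hz hg) dual_one_val (chtrivE hz hg) ?(dual_one_in hz hg) /=.
apply/forallP => f1; apply/implyP; rewrite inE => /andP [f1D /eqP f1h].
apply/forallP => f2; apply/implyP; rewrite inE => /andP [f2D /eqP f2h].
apply/forallP => f; apply/implyP => fD; apply/implyP.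
rewrite (chprodE hz hg) // => /eqP ->.
by rewrite inE (dual_mul_char_in hz) //= dual_mul_char_res f1h f2h mod0n.
Qed.

Lemma res_kernel_nontriv : (#[h]%g < #[g]%g)%N -> nontriv z sigma res_kernel.
Proof.
move=> lt_hg; pose f := dual_char G sigma (Ordinal lt_hg).
have fD : f \in D := dual_char_in hz hsG hg _.
have [r def_h] : exists r, h = (g ^+ r)%g by apply/cycleP; rewrite -hg.
have w_prim := gen_root_prim hz hsG hg.
apply/existsP; exists f; rewrite inE fD /= (chtrivE hz hg) //; apply/andP; split.
  have : chi z f h = z ^+ 0.
    rewrite def_h (dual_chiX hz hg) // (dual_char_gen hz hsG hg) -exprM expr0 /=.
    apply/eqP; rewrite -(prim_order_dvd w_prim) order_dvdn mulnC expgM -def_h.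
    by rewrite expg_order.
  by move/(expz_inj hz (b := Ordinal (cardG_gt0 G))) => ->.
apply/eqP => f1; have := dual_char_gen hz hsG hg (Ordinal lt_hg).
rewrite -/f f1 /chi dual_one_val expr0 => /esym /eqP; rewrite -(prim_order_dvd w_prim).
by move/(dvdn_leq (order_gt0 h)); rewrite leqNgt lt_hg.
Qed.

Lemma res_coef_eprim : (#[h]%g < #[g]%g)%N -> forall i, res_coef (eprim n z sigma) i = 0.
Proof.
move=> lt_hg; have [A minA sAK] := min_nontriv_sub res_kernel_subgrp (res_kernel_nontriv lt_hg).
apply: (res_coef_prod_eq0 (A0 := A)) => //; apply: res_coef_factor_eq0 => //.
by case/and3P: minA => _ /existsP [f /andP [fA _]] _; apply/set0Pn; exists f.
Qed.

End Restriction.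

Lemma mx_rsim_subg_cycle (F : fieldType) (gT : finGroupType) (G H : {group gT}) (h : gT)
    nV nW (V : mx_representation F G nV) (W : mx_representation F G nW) (sHG : H \subset G) :
  (H : {set gT}) = <[h]>%g -> mx_sim (V h) (W h) ->
  mx_rsim (subg_repr V sHG) (subg_repr W sHG).
Proof.
move=> defH [B [dimVW fB hB]]; have hG : h \in G by rewrite (subsetP sHG) // defH cycle_id.
exists B => // x xH; have /cycleP [i ->] : x \in <[h]>%g by rewrite -defH.
by rewrite /= !repr_mx_exp // -(intertwine_exp (esym hB)).
Qed.

Unset Implicit Arguments.
Theorem lemma4p5 (k l0 : fieldType) (iota : {rmorphism k -> l0}) (z : l0)
  (gT : finGroupType) (G sigma sigma' : {group gT})
  (hn : (#|G|%:R : k) != 0)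
  (hsG : sigma \subset G) (hcyc : cyclic sigma)
  (hz : #|G|.-primitive_root z)
  (hl0 : forall x : l0, exists p : {poly k}, x = (map_poly iota p).[z])
  (hprop : sigma' \proper sigma)
  (m dV dW : nat) (V : mx_representation k sigma dV) (W : mx_representation k sigma dW)
  (hrep : forall f, f \in dual #|G| z sigma ->
     ((mult z (map_repr iota V) f)%:R - (mult z (map_repr iota W) f)%:R : rat)
       = (#|G| ^ m)%:R * eprim #|G| z sigma f) :
  mx_rsim (subg_repr V (proper_sub hprop)) (subg_repr W (proper_sub hprop)).
Proof.
have [g hg] := cyclicP hcyc.
have [h hh] := cyclicP (cyclicS (proper_sub hprop) hcyc).
have hs : h \in sigma by rewrite (subsetP (proper_sub hprop)) // hh cycle_id.
have lt_hg : (#[h]%g < #[g]%g)%N by rewrite !orderE -hh -hg proper_card.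
have e_neq0 : #[h]%g%:R != 0 :> k.
  apply: contraNneq hn => e0.
  by rewrite -(divnK (order_dvdG (subsetP hsG h hs))) natrM e0 mulr0.
have eq_res_mult i : (\sum_(f in dual #|G| z sigma | f h == i) mult z (map_repr iota V) f =
                      \sum_(f in dual #|G| z sigma | f h == i) mult z (map_repr iota W) f)%N.
  apply/eqP; rewrite -(Num.Theory.eqr_nat rat) -subr_eq0 !natr_sum -sumrB.
  rewrite (eq_bigr _ (fun f fDh => hrep f (andP fDh).1)) -mulr_sumr.
  by have := res_coef_eprim hz hsG hg hs lt_hg i; rewrite /res_coef => ->; rewrite mulr0.
(* Ranks are unchanged by [iota]. *)
have eq_rank_ker q : \rank (kermxpoly (V h) q) = \rank (kermxpoly (W h) q).
  rewrite -(mxrank_map iota) -[RHS](mxrank_map iota) !map_kermxpoly.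
  rewrite (rank_kermxpoly_repr hz hsG hg (map_repr iota V) _ hs).
  rewrite (rank_kermxpoly_repr hz hsG hg (map_repr iota W) _ hs).
  by apply: eq_bigr => i _; apply: eq_res_mult.
have order_h dX (X : mx_representation k sigma dX) : X h ^+ #[h]%g = 1.
  by rewrite -repr_mx_exp // expg_order repr_mx1.
apply: mx_rsim_subg_cycle hh _.
exact: mx_sim_of_rank_kermxpoly e_neq0 (order_h _ V) (order_h _ W) eq_rank_ker.
Qed.
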